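(* Let $M,N\in\mathbb N$ be arbitrary and $T\in(0,\infty)$; let $g$ and $u_0$ be as in the context, and assume moreover $u_0(x)\ge0$ for all $x\in[0,1]$. Let $u_0^{\rm LT},\dots,u_M^{\rm LT}$ be given by the Lie–Trotter splitting scheme described in the context, with $h=1/N$, $\tau=T/M$, and initial value $u_{0,n}^{\rm LT}=u_0(x_n)\ge0$. Then, almost surely, $u_{m,n}^{\rm LT}\ge0$ for all $m\in\{1,\dots,M\}$ and all $n\in\{1,\dots,N-1\}$.
   Context: $W$ is an $\mathcal F_t$-adapted Brownian sheet on $[0,T]\times[0,1]$ (centered Gaussian field with covariance $(t\wedge s)(x\wedge y)$). The map $g:\mathbb R\to\mathbb R$ is of class $\mathcal C^1$, globally Lipschitz, with $g(0)=0$; define $f:\mathbb R\to\mathbb R$ by $f(v)=g(v)/v$ for $v\ne0$ and $f(0)=g'(0)$ (so $g(v)=vf(v)$ and $f$ is bounded and continuous). The initial value $u_0:[0,1]\to\mathbb R$ is of class $\mathcal C^3$ with $u_0(0)=u_0(1)=0$. Let $h=1/N$, $x_n=nh$ ($0\le n\le N$), $\tau=T/M$, $t_m=m\tau$. Let $D^N$ be the $(N-1)\times(N-1)$ tridiagonal matrix with $-2$ on the diagonal and $1$ on the sub- and super-diagonals. Let $W_n^N(t)=\sqrt N\,(W(t,x_{n+1})-W(t,x_n))$ and $\Delta_{m,n}W=W_n^N(t_{m+1})-W_n^N(t_m)$ for $1\le n\le N-1$. The Lie–Trotter splitting scheme is: $u_{0,n}^{\rm LT}=u_0(x_n)$ for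 $1\le n\le N-1$, and for $0\le m\le M-1$, $$u_{m+1}^{\rm LT}=e^{\tau N^2D^N}\Big(\exp\big(\sqrt N f(u_{m,n}^{\rm LT})\Delta_{m,n}W-\tfrac{N f(u_{m,n}^{\rm LT})^2\tau}{2}\big)u_{m,n}^{\rm LT}\Big)_{1\le n\le N-1},$$ where $u_m^{\rm LT}=(u_{m,n}^{\rm LT})_{1\le n\le N-1}\in\mathbb R^{N-1}$; by convention $u_{m,0}^{\rm LT}=u_{m,N}^{\rm LT}=0$. *)

From HB Require Import structures.
From mathcomp Require Import all_boot all_order all_algebra.
From mathcomp Require Import all_classical all_reals all_analysis.
Set Implicit Arguments. Unset Strict Implicit. Unset Printing Implicit Defensive.
Import Order.TTheory GRing.Theory Num.Theory.
Import numFieldNormedType.Exports.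
Local Open Scope classical_set_scope.
Local Open Scope ring_scope.

Section defs.
Context {R : realType}.

Definition centered_gauss_law (v : R) (B : set R) : \bar R :=
  if v == 0 then \d_(0:R) B else normal_prob 0 (Num.sqrt v) B.

(** [W t x omega] is an [F_t]-adapted Brownian sheet on [0,T]x[0,1]:
    [F] is a filtration of sub-sigma-algebras, each [W t x] is
    [F t]-measurable, and [W] is a centered Gaussian field (every finite
    linear combination is centered Gaussian) with covariance
    [(t /\ s)(x /\ y)]. *)
Definition brownian_sheet d (Omega : measurableType d) (P : probability Omega R)
    (T : R) (F : R -> set (set Omega)) (W : R -> R -> Omega -> R) : Prop :=
  [/\ (forall t, sigma_algebra setT (F t) /\ F t `<=` measurable),
      (forall s t, 0 <= s -> s <= t -> t <= T -> F s `<=` F t),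
      (forall t x, 0 <= t <= T -> 0 <= x <= 1 ->
         forall B : set R, measurable B -> F t (W t x @^-1` B)) &
      (forall s : seq ((R * R) * R),
         all (fun p => (0 <= p.1.1 <= T) && (0 <= p.1.2 <= 1)) s ->
         forall B : set R, measurable B ->
           P ((fun w => \sum_(p <- s) p.2 * W p.1.1 p.1.2 w) @^-1` B) =
           centered_gauss_law
             (\sum_(p <- s) \sum_(q <- s)
                 p.2 * q.2 * Order.min p.1.1 q.1.1 * Order.min p.1.2 q.1.2) B)].

Definition f_of (g : R -> R) (v : R) : R :=
  if v == 0 then derive1 g 0 else g v / v.

(** The (N-1)x(N-1) tridiagonal matrix D^N; index [i : 'I_(N.-1)]
    corresponds to the grid point [x_(i+1)]. *)
Definition DN (N : nat) : 'M[R]_(N.-1) :=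
  \matrix_(i, j) (if (i == j :> nat) then -2
                  else if (i.+1 == j :> nat) || (j.+1 == i :> nat) then 1
                  else 0).

Definition expmx n (A : 'M[R]_n) : 'M[R]_n :=
  \matrix_(i, j) limn (fun K : nat =>
      (\sum_(k < K) (k`!%:R)^-1 *: A ^+ k) i j).

(** Lie-Trotter scheme.  [uLT ... w m] is the column vector
    (u^LT_{m,n})_{1<=n<=N-1}, entry [i] standing for [n = i+1]. *)
Section scheme.
Variables (Omega : Type) (g u0 : R -> R) (W : R -> R -> Omega -> R)
          (T : R) (M N : nat).

Definition tau : R := T / M%:R.
Definition t_ (m : nat) : R := m%:R * tau.
Definition x_ (n : nat) : R := n%:R / N%:R.

Definition WN (n : nat) (t : R) (w : Omega) : R :=
  Num.sqrt N%:R * (W t (x_ n.+1) w - W t (x_ n) w).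

Definition DeltaW (m n : nat) (w : Omega) : R :=
  WN n (t_ m.+1) w - WN n (t_ m) w.

Fixpoint uLT (w : Omega) (m : nat) : 'cV[R]_(N.-1) :=
  match m with
  | 0 => \col_i u0 (x_ i.+1)
  | m'.+1 =>
      let v := uLT w m' in
      expmx ((tau * N%:R ^+ 2) *: DN N) *m
        \col_i (expR (Num.sqrt N%:R * f_of g (v i 0) * DeltaW m' i.+1 w
                       - N%:R * f_of g (v i 0) ^+ 2 * tau / 2) * v i 0)
  end.
End scheme.
End defs.

From HB Require Import structures.
From mathcomp Require Import all_boot all_order all_algebra.
From mathcomp Require Import all_classical all_reals all_analysis.
From mathcomp Require Import zify ring.
Import Order.TTheory GRing.Theory Num.Theory.
Import numFieldNormedType.Exports.
Local Open Scope classical_set_scope.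
Local Open Scope ring_scope.

(* Positivity holds for every sample path, whatever W and g are: a step
   multiplies a nonnegative vector entrywise by positive exponential factors
   and then applies exp(c D^N) with c = tau N^2 >= 0.  That matrix is entrywise
   nonnegative because C := c D^N + 2c I is and exp(C - 2c I) = e^(-2c) exp(C).
   Only a weak form of the last identity is needed: the partial sums of the
   series of exp(C - s I) are convolutions of the nonnegative terms of the
   series of exp(C) with the partial sums of the series of e^(-s), and such
   convolutions have nonnegative limits. *)

Section positivity.
Variable R : realType.
Implicit Types (a e : nat -> R) (s : R).

Lemma sum_convolution_series a e K :
  \sum_(0 <= k < K) \sum_(0 <= i < k.+1) a (k - i)%N * e i =
  \sum_(0 <= i < K) e i * series a (K - i)%N.
Proof.
elim: K => [|K IH]; first by rewrite !big_geq.
rewrite big_nat_recr //= IH [in RHS]big_nat_recr //= [X in _ + X = _]big_nat_recr //=.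
rewrite subnn subSnn /series /= big_nat1 addrA mulrC; congr (_ + _).
rewrite -big_split /=; apply: eq_big_nat => i /andP[_ hi].
by rewrite subSn ?(ltnW hi) // big_nat_recr //= mulrDr [a _ * _]mulrC.
Qed.

(* One half of Mertens' theorem on Cauchy products: the partial sums [A r]
   are eventually positive and bounded below, and the weights [e i] of the
   finitely many possibly negative terms form a vanishing tail of [series e]. *)
Lemma lim_convolution_series_ge0 a e :
  (forall i, 0 <= e i) -> cvgn (series e) ->
  cvgn (series a) -> 0 < limn (series a) ->
  cvgn (fun K => \sum_(0 <= i < K) e i * series a (K - i)%N) ->
  0 <= limn (fun K => \sum_(0 <= i < K) e i * series a (K - i)%N).
Proof.
move=> e_ge0 /cvg_ex[l el] a_cvg a_gt0 conv_cvg.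
set A := series a; set E := series e.
have [r0 _ A_gt0] : \forall r \near \oo, 0 < A r by exact: (cvgr_gt _ a_cvg 0 a_gt0).
set D := \sum_(0 <= r < r0) `|A r|.
have A_ge r : - D <= A r.
  case: (leqP r0 r) => hr.
    by apply: le_trans (ltW (A_gt0 _ hr)); rewrite oppr_le0 sumr_ge0.
  rewrite lerNl; apply: le_trans (ler_norm _) _; rewrite normrN.
  rewrite /D (bigD1_seq r) /= ?mem_iota ?iota_uniq ?add0n ?subn0 ?hr //.
  by apply: ler_wpDr => //; exact: sumr_ge0.
set tail := fun K => - D * (E K - E (K - r0)%N).
have tail0 : tail @ \oo --> 0.
  have El : (fun K => E (K - r0)%N) @ \oo --> l.
    rewrite -(cvg_shiftn r0) /=; apply: cvg_trans el.
    by apply: near_eq_cvg; near=> K; rewrite addnK.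
  by rewrite -(mulr0 (- D)) -(subrr l); apply: cvgM; [exact: cvg_cst | exact: cvgB].
apply: (@le_trans _ _ (limn tail)); first by rewrite (cvg_lim _ tail0).
apply: ler_lim => //; first by apply/cvg_ex; exists 0.
near=> K.
have hK : (K - r0 <= K)%N by rewrite leq_subr.
rewrite (big_cat_nat _ hK) //= -[tail K]add0r.
apply: lerD.
  rewrite big_nat_cond; apply: sumr_ge0 => i /andP[/andP[_ hi] _].
  by apply: mulr_ge0; [|apply: ltW; apply: A_gt0; rewrite /=; lia].
rewrite /tail /E /series /= (big_cat_nat _ hK) //= addrC addrK mulr_sumr.
by apply: ler_sum => i _; rewrite mulrC ler_wpM2l.
Unshelve. all: by end_near.
Qed.

Lemma invr_fact_mul_bin k i : (i <= k)%N ->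
  (k`!%:R)^-1 * 'C(k, i)%:R = (i`!%:R)^-1 * ((k - i)`!%:R)^-1 :> R.
Proof.
move=> ik; rewrite -(bin_fact ik) !natrM.
have fact_neq0 j : (j`!%:R : R) != 0 by rewrite pnatr_eq0 -lt0n fact_gt0.
have bin_neq0 : ('C(k, i)%:R : R) != 0 by rewrite pnatr_eq0 -lt0n bin_gt0.
by field; rewrite !fact_neq0 bin_neq0.
Qed.

Lemma expmx_partial_sumE n (X : 'M[R]_n) i j K :
  (\sum_(k < K) (k`!%:R)^-1 *: X ^+ k) i j =
  series (fun k => (k`!%:R)^-1 * (X ^+ k) i j) K.
Proof.
by rewrite /series /= summxE big_mkord; apply: eq_bigr => k _; rewrite mxE.
Qed.

Lemma normr_exprmx_le n (X : 'M[R]_n) k i j :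
  `|(X ^+ k) i j| <= (\sum_p \sum_q `|X p q|) ^+ k.
Proof.
set b := \sum_p \sum_q _.
elim: k i j => [|k IH] i j.
  by rewrite expr0 mxE; case: (i == j); rewrite ?normr1 ?normr0.
rewrite exprSr -mulmxE mxE; apply: le_trans (ler_norm_sum _ _ _) _.
apply: (@le_trans _ _ (\sum_l b ^+ k * `|X l j|)).
  by apply: ler_sum => l _; rewrite normrM ler_wpM2r.
have b_ge0 : 0 <= b by do 2!apply: sumr_ge0 => ? _.
rewrite -mulr_sumr exprSr ler_wpM2l ?exprn_ge0 //.
by apply: ler_sum => l _; rewrite (bigD1 j) //= lerDl sumr_ge0.
Qed.

Lemma is_cvg_expmx_series n (X : 'M[R]_n) i j :
  cvgn (series (fun k => (k`!%:R)^-1 * (X ^+ k) i j)).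
Proof.
set b := \sum_p \sum_q `|X p q|.
have b_ge0 : 0 <= b by do 2!apply: sumr_ge0 => ? _.
apply: (@normed_cvg R R^o); apply: (@series_le_cvg _ _ (exp_coeff b)) => //=.
- by move=> k; rewrite /exp_coeff /= divr_ge0 ?exprn_ge0.
- move=> k /=; rewrite normrM ger0_norm ?invr_ge0 // mulrC.
  by rewrite /exp_coeff /= ler_wpM2r ?invr_ge0 ?normr_exprmx_le.
- exact: is_cvg_series_exp_coeff.
Qed.

Lemma exprmx_ge0 n (C : 'M[R]_n) : (forall i j, 0 <= C i j) ->
  forall k i j, 0 <= (C ^+ k) i j.
Proof.
move=> C_ge0; elim=> [|k IH] i j; first by rewrite expr0 mxE; case: (i == j).
by rewrite exprSr -mulmxE mxE sumr_ge0 // => l _; apply: mulr_ge0.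
Qed.

Lemma expmx_partial_sum_shiftE n (C : 'M[R]_n) s i j K :
  (\sum_(k < K) (k`!%:R)^-1 *: (C - s%:M) ^+ k) i j =
  \sum_(0 <= l < K)
     ((l`!%:R)^-1 * (C ^+ l) i j) * series (exp_coeff (- s)) (K - l)%N.
Proof.
rewrite -sum_convolution_series summxE.
rewrite -(big_mkord xpredT (fun k => ((k`!%:R)^-1 *: (C - s%:M) ^+ k) i j)).
apply: eq_big_nat => k _.
rewrite -raddfN addrC exprDn_comm; last by rewrite /GRing.comm -!mulmxE comm_scalar_mx.
rewrite mxE summxE big_mkord mulr_sumr; apply: eq_bigr => l _.
have lk : (l <= k)%N by rewrite -ltnS ltn_ord.
rewrite mulmxnE -rmorphXn -mulmxE mul_scalar_mx !mxE /exp_coeff /=.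
rewrite -[_ *+ 'C(k, l)]mulr_natr.
transitivity ((k`!%:R^-1 * 'C(k, l)%:R) * ((- s) ^+ (k - l)%N * (C ^+ l) i j)).
  by ring.
by rewrite invr_fact_mul_bin //; ring.
Qed.

Lemma expmx_ge0 n (X : 'M[R]_n) s : (forall i j, 0 <= (X + s%:M) i j) ->
  forall i j, 0 <= expmx X i j.
Proof.
move=> C_ge0 i j; set C := X + s%:M.
have XE : X = C - s%:M by rewrite addrK.
have partialE : (fun K => (\sum_(k < K) (k`!%:R)^-1 *: X ^+ k) i j) =
    (fun K => \sum_(0 <= l < K)
       ((l`!%:R)^-1 * (C ^+ l) i j) * series (exp_coeff (- s)) (K - l)%N).
  by apply/funext => K; rewrite XE expmx_partial_sum_shiftE.
have X_cvg : cvgn (fun K => (\sum_(k < K) (k`!%:R)^-1 *: X ^+ k) i j).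
  by rewrite (funext (expmx_partial_sumE _ X i j)); exact: is_cvg_expmx_series.
rewrite /expmx mxE partialE; rewrite partialE in X_cvg.
apply: lim_convolution_series_ge0 => //.
- by move=> l; rewrite mulr_ge0 ?invr_ge0 ?exprmx_ge0.
- exact: is_cvg_expmx_series.
- exact: is_cvg_series_exp_coeff.
- exact: expR_gt0.
Qed.

Lemma scale_DN_shift_ge0 N (c : R) : 0 <= c ->
  forall i j, 0 <= (c *: DN N + (2 * c)%:M) i j.
Proof.
move=> c_ge0 i j; rewrite !mxE.
have [->|ij] := eqVneq i j; first by rewrite eqxx mulr1n mulrN mulrC addNr.
rewrite (inj_eq val_inj) (negbTE ij) mulr0n addr0.
by case: ifP => _; rewrite ?mulr1 ?mulr0.
Qed.

Lemma expmx_scale_DN_ge0 N (c : R) : 0 <= c ->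
  forall i j, 0 <= expmx (c *: DN N) i j.
Proof. by move=> c_ge0; apply: expmx_ge0; exact: scale_DN_shift_ge0. Qed.

Lemma uLT_ge0 (Omega : Type) (g u0 : R -> R) (W : R -> R -> Omega -> R)
    (T : R) (M N : nat) :
  0 <= T -> (forall x, 0 <= x <= 1 -> 0 <= u0 x) ->
  forall w m (i : 'I_N.-1), 0 <= uLT g u0 W T M N w m i 0.
Proof.
move=> T_ge0 u0_ge0 w; elim=> [|m IH] i /=; rewrite mxE.
  have iN : (i.+1 <= N)%N by have := ltn_ord i; lia.
  have N_gt0 : (0 : R) < N%:R by rewrite ltr0n; lia.
  by apply: u0_ge0; rewrite /x_ divr_ge0 ?ler_pdivrMr //= mul1r ler_nat.
apply: sumr_ge0 => l _; apply: mulr_ge0.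
  by apply: expmx_scale_DN_ge0; rewrite mulr_ge0 ?divr_ge0 ?exprn_ge0.
by rewrite mxE mulr_ge0 ?expR_ge0.
Qed.
End positivity.

Theorem proposition3p1 (R : realType) (d : measure_display)
  (Omega : measurableType d) (P : probability Omega R)
  (T : R) (F : R -> set (set Omega)) (W : R -> R -> Omega -> R)
  (g u0 : R -> R) (M N : nat) :
  (0 < M)%N -> (0 < N)%N -> 0 < T ->
  brownian_sheet P T F W ->
  (* g is C^1, globally Lipschitz, g(0) = 0 *)
  (forall x, derivable g x 1) -> continuous (derive1 g) ->
  (exists L : R, forall x y, `|g x - g y| <= L * `|x - y|) ->
  g 0 = 0 ->
  (* u0 is C^3, vanishes at 0 and 1, and is nonnegative on [0,1] *)
  (forall k x, (k < 3)%N -> derivable (derive1n k u0) x 1) ->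
  continuous (derive1n 3 u0) ->
  u0 0 = 0 -> u0 1 = 0 ->
  (forall x, 0 <= x <= 1 -> 0 <= u0 x) ->
  {ae P, forall w, forall (m : nat) (i : 'I_(N.-1)),
      (1 <= m <= M)%N -> 0 <= uLT g u0 W T M N w m i 0}.
Proof.
move=> _ _ T_gt0 _ _ _ _ _ _ _ _ _ u0_ge0.
by apply: aeW => w m i _; apply: uLT_ge0 => //; exact: ltW.
Qed.
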